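(* Let $f\in C^{1,1}_L(\mathbb{R}^n)$, let $\mathcal{Y}=\{y_1,\dots,y_{n+1}\}\subset\mathbb{R}^n$ be affinely independent, let $m$ be the affine function interpolating $f$ on $\mathcal{Y}$, and let $y_0\in\mathbb{R}^n$ with barycentric coordinates $\ell_1,\dots,\ell_{n+1}$ and $\ell_0=-1$. Define $$w=\frac{\sum_{i=0}^{n+1}|\ell_i|\,y_i}{\sum_{i=0}^{n+1}|\ell_i|}.$$ Then $$|m(y_0)-f(y_0)|\le \frac{L}{2}\sum_{i=0}^{n+1}|\ell_i|\,\|y_i-w\|^2,$$ and $w$ minimizes $u\mapsto \frac{L}{2}\sum_{i=0}^{n+1}|\ell_i|\,\|y_i-u\|^2$ over $u\in\mathbb{R}^n$.
   Context: Let $n\ge1$ and $L>0$. $C^{1,1}_L(\mathbb{R}^n)$ denotes the set of differentiable functions $f:\mathbb{R}^n\to\mathbb{R}$ with $\|\nabla f(u_1)-\nabla f(u_2)\|\le L\|u_1-u_2\|$ for all $u_1,u_2\in\mathbb{R}^n$ (Euclidean norm). For an affinely independent set $\mathcal{Y}=\{y_1,\dots,y_{n+1}\}\subset\mathbb{R}^n$, the interpolating affine function $m$ is the unique affine $m:\mathbb{R}^n\to\mathbb{R}$ with $m(y_i)=f(y_i)$ for $i=1,\dots,n+1$. The barycentric coordinates of $y_0\in\mathbb{R}^n$ with respect to $\mathcal{Y}$ are the unique reals $\ell_1,\dots,\ell_{n+1}$ with $\sum_{i=1}^{n+1}\ell_i=1$ and $\sum_{i=1}^{n+1}\ell_iy_i=y_0$;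 one sets $\ell_0=-1$, so that $\sum_{i=0}^{n+1}\ell_i=0$, $\sum_{i=0}^{n+1}\ell_iy_i=0$, and $m(y_0)=\sum_{i=1}^{n+1}\ell_if(y_i)$. *)

From HB Require Import structures.
From mathcomp Require Import all_boot all_order all_algebra.
From mathcomp Require Import all_classical all_reals all_analysis.
Set Implicit Arguments. Unset Strict Implicit. Unset Printing Implicit Defensive.
Import Order.TTheory GRing.Theory Num.Theory.
Import numFieldNormedType.Exports.
Local Open Scope ring_scope.

Definition enorm {R : realType} {n : nat} (v : 'rV[R]_n) : R :=
  Num.sqrt (\sum_(j < n) v 0 j ^+ 2).

Definition grad {R : realType} {n : nat} (f : 'rV[R]_n -> R) (x : 'rV[R]_n) : 'rV[R]_n :=
  \row_(j < n) ('d f x (delta_mx 0 j : 'rV[R]_n) : R).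

Definition C11 {R : realType} {n : nat} (L : R) (f : 'rV[R]_n -> R) : Prop :=
  (forall x, differentiable f x) /\
  (forall u1 u2, enorm (grad f u1 - grad f u2) <= L * enorm (u1 - u2)).

Definition affinely_independent {R : realType} {n k : nat} (y : 'I_k -> 'rV[R]_n) : Prop :=
  forall c : 'I_k -> R, \sum_(i < k) c i = 0 -> \sum_(i < k) c i *: y i = 0 ->
  forall i, c i = 0.

Definition affine_fun {R : realType} {n : nat} (m : 'rV[R]_n -> R) : Prop :=
  exists (g : 'rV[R]_n) (c : R), forall x, m x = c + \sum_(j < n) g 0 j * x 0 j.

Definition barycentric {R : realType} {n k : nat} (y : 'I_k -> 'rV[R]_n)
  (y0 : 'rV[R]_n) (ell : 'I_k -> R) : Prop :=
  \sum_(i < k) ell i = 1 /\ \sum_(i < k) ell i *: y i = y0.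

(* Extended families indexed by 0..n+1: index 0 is y0 with ell_0 = -1. *)
Definition extY {R : realType} {n k : nat} (y0 : 'rV[R]_n) (y : 'I_k -> 'rV[R]_n)
  (i : 'I_k.+1) : 'rV[R]_n :=
  match unlift ord0 i with None => y0 | Some j => y j end.

Definition extL {R : realType} {k : nat} (ell : 'I_k -> R) (i : 'I_k.+1) : R :=
  match unlift ord0 i with None => -1 | Some j => ell j end.

Definition wpt {R : realType} {n k : nat} (y0 : 'rV[R]_n) (y : 'I_k -> 'rV[R]_n)
  (ell : 'I_k -> R) : 'rV[R]_n :=
  (\sum_(i < k.+1) `|extL ell i|)^-1 *: \sum_(i < k.+1) `|extL ell i| *: extY y0 y i.

Definition Phi {R : realType} {n k : nat} (L : R) (y0 : 'rV[R]_n) (y : 'I_k -> 'rV[R]_n)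
  (ell : 'I_k -> R) (u : 'rV[R]_n) : R :=
  L / 2 * \sum_(i < k.+1) `|extL ell i| * enorm (extY y0 y i - u) ^+ 2.

From HB Require Import structures.
From mathcomp Require Import all_boot all_order all_algebra.
From mathcomp Require Import all_classical all_reals all_analysis.
From mathcomp Require Import ring.
Set Implicit Arguments.
Unset Strict Implicit.
Unset Printing Implicit Defensive.

Import Order.TTheory GRing.Theory Num.Theory.
Import numFieldNormedType.Exports.
Local Open Scope classical_set_scope.
Local Open Scope ring_scope.

(* The coefficients ell_0 = -1, ell_1, ..., ell_{n+1} sum to 0 and annihilate
   the points y_0, ..., y_{n+1}, so the combination sum_i ell_i f(y_i), which
   equals m(y_0) - f(y_0), kills every affine function.  Subtracting the
   first-order Taylor expansion of f at an arbitrary point w and bounding each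
   remainder by the descent lemma |f y - f w - f'(w)(y - w)| <= L/2 |y - w|^2
   gives the estimate for every w; the weighted centroid w of the y_i with
   weights |ell_i| is the minimiser of the right-hand side. *)

Section CauchySchwarz.
Variable R : realType.

Lemma cauchy_schwarz_sqr (k : nat) (a b : 'I_k -> R) :
  (\sum_i a i * b i) ^+ 2 <= (\sum_i a i ^+ 2) * (\sum_i b i ^+ 2).
Proof.
have lagrange : \sum_i \sum_j (a i * b j - a j * b i) ^+ 2 =
    2 * ((\sum_i a i ^+ 2) * (\sum_i b i ^+ 2) - (\sum_i a i * b i) ^+ 2).
  have dbl (F G : 'I_k -> R) : (\sum_i F i) * (\sum_j G j) = \sum_i \sum_j F i * G j.
    by rewrite mulr_suml; apply: eq_bigr => i _; rewrite mulr_sumr.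
  rewrite mulrBr mulrDl mul1r expr2 !dbl [X in _ + X - _]exchange_big /=.
  rewrite mulr_sumr -big_split -sumrB; apply: eq_bigr => i _ /=.
  rewrite mulr_sumr -big_split -sumrB; apply: eq_bigr => j _ /=; ring.
rewrite -subr_ge0 -(pmulr_rge0 _ (ltr0n R 2)) -lagrange.
by do 2![apply: sumr_ge0 => ? _]; exact: sqr_ge0.
Qed.

Lemma cauchy_schwarz (k : nat) (a b : 'I_k -> R) :
  `|\sum_i a i * b i| <= Num.sqrt (\sum_i a i ^+ 2) * Num.sqrt (\sum_i b i ^+ 2).
Proof.
rewrite -sqrtrM; last by apply: sumr_ge0 => i _; exact: sqr_ge0.
rewrite -sqrtr_sqr ler_sqrt; first exact: cauchy_schwarz_sqr.
by apply: mulr_ge0; apply: sumr_ge0 => i _; exact: sqr_ge0.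
Qed.

End CauchySchwarz.

Section RowCalculus.
Variables (R : realType) (n : nat).
Implicit Types (f : 'rV[R]_n -> R) (u v x : 'rV[R]_n).

Lemma enorm_sqr v : enorm v ^+ 2 = \sum_j v 0 j ^+ 2.
Proof. by rewrite sqr_sqrtr //; apply: sumr_ge0 => j _; exact: sqr_ge0. Qed.

Lemma enormZ (t : R) v : enorm (t *: v) = `|t| * enorm v.
Proof.
rewrite /enorm -sqrtr_sqr -sqrtrM ?sqr_ge0 // mulr_sumr; congr Num.sqrt.
by apply: eq_bigr => j _; rewrite mxE exprMn.
Qed.

Lemma diff_gradE f x v : 'd f x v = \sum_j v 0 j * grad f x 0 j.
Proof.
rewrite {1}[v]row_sum_delta linear_sum; apply: eq_bigr => j _.
by rewrite linearZ /grad mxE.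
Qed.

Lemma C11_diff_lipschitz L f x u v : C11 L f ->
  `|'d f x v - 'd f u v| <= enorm v * (L * enorm (x - u)).
Proof.
(* Generalizing the differentials keeps them from being unfolded by rewriting. *)
case=> _ /(_ x u); move: (diff_gradE f x v) (diff_gradE f u v).
generalize ('d f x v) ('d f u v) (grad f x) (grad f u) => dx du gx gu dxE duE lip.
have -> : dx - du = \sum_j v 0 j * (gx - gu) 0 j.
  by rewrite dxE duE -sumrB; apply: eq_bigr => j _; rewrite !mxE mulrBr.
apply: le_trans (_ : _ <= enorm v * enorm (gx - gu)) _; first exact: cauchy_schwarz.
by apply: ler_wpM2l; [exact: sqrtr_ge0 | exact: lip].
Qed.

Lemma is_derive_line f u v t : differentiable f (u + t *: v) ->
  is_derive t 1 (fun s : R => f (u + s *: v)) ('d f (u + t *: v) v).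
Proof.
move=> df.
have shiftE : (fun h : R => h^-1 *: (((fun s => f (u + s *: v)) \o shift t) (h *: 1)
      - f (u + t *: v))) =
    (fun h => h^-1 *: ((f \o shift (u + t *: v)) (h *: v) - f (u + t *: v))).
  apply: funext => h /=; congr (_ *: (_ - _)); congr f.
  by rewrite [_%:A]mulr1 scalerDl addrCA addrA.
apply: DeriveDef; first by rewrite /derivable shiftE; exact: diff_derivable.
by rewrite /derive shiftE -/(derive f _ v) deriveE.
Qed.

End RowCalculus.

Section IncrementBound.
Variable R : realType.

Lemma increment_bound_of_derive (F D : R -> R) (K c : R) :
  (forall t, is_derive t (1 : R) F (D t)) ->
  (forall t, 0 <= t -> `|D t - c| <= K * t) ->
  `|F 1 - F 0 - c| <= K / 2.
Proof.
move=> dF hD.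
suff signed s : `|s| <= 1 -> s * (F 1 - F 0 - c) <= K / 2.
  rewrite ler_norml; apply/andP; split.
    by rewrite lerNl -mulN1r signed // normrN normr1.
  by rewrite -[X in X <= _]mul1r signed // normr1.
move=> s1.
(* h' = s (D - c) - K t <= 0, so h 1 <= h 0 by the mean value theorem. *)
pose h := s \*: (F - c \*: @id R) - (K / 2) \*: (@id R ^+ 2).
have dh t : is_derive t (1 : R) h (s * (D t - c) - K * t).
  apply: is_derive_eq (is_deriveB (is_deriveZ s (is_deriveB (dF t)
    (is_deriveZ c (is_derive_id t 1)))) (is_deriveZ (K / 2) (is_deriveX 2 (is_derive_id t 1)))) _.
  by rewrite /GRing.scale /= !mulr1 expr1 mulrA divfK ?pnatr_eq0.
have hc : {within `[0, 1], continuous h}.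
  by apply: derivable_within_continuous => t _; case: (dh t).
have [t /[!in_itv] /= /andP[/ltW t0 _] hmvt] := MVT ltr01 (fun t _ => dh t) hc.
have h10 : h 1 - h 0 = s * (F 1 - F 0 - c) - K / 2.
  by change (s * (F 1 - c * 1) - K / 2 * 1 ^+ 2 - (s * (F 0 - c * 0) - K / 2 * 0 ^+ 2)
    = s * (F 1 - F 0 - c) - K / 2); ring.
rewrite -subr_le0 -h10 hmvt subr0 mulr1 subr_le0.
apply: le_trans (ler_norm _) _; rewrite normrM.
exact: le_trans (ler_piMl (normr_ge0 _) s1) (hD t t0).
Qed.

End IncrementBound.

Section AffineCombinations.
Variables (R : realType) (n k : nat).
Implicit Types (c : 'I_k -> R) (Y : 'I_k -> 'rV[R]_n).

Lemma null_combination_affine c Y (l : {linear 'rV[R]_n -> R}) (a : R) w :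
  \sum_i c i = 0 -> \sum_i c i *: Y i = 0 -> \sum_i c i * (a + l (Y i - w)) = 0.
Proof.
move=> c0 cY0; under eq_bigr do rewrite mulrDr -linearZ scalerBr.
rewrite big_split /= -mulr_suml c0 mul0r add0r -linear_sum sumrB cY0.
by rewrite -scaler_suml c0 scale0r subrr linear0.
Qed.

Lemma affine_fun_barycentric (m : 'rV[R]_n -> R) Y y0 ell :
  affine_fun m -> barycentric Y y0 ell -> \sum_i ell i * m (Y i) = m y0.
Proof.
case=> g [a mE] [ell1 <-]; rewrite mE.
under eq_bigr do rewrite mE mulrDr mulr_sumr.
rewrite big_split /= -mulr_suml ell1 mul1r exchange_big /=; congr (_ + _).
apply: eq_bigr => j _; rewrite summxE mulr_sumr.
by apply: eq_bigr => i _; rewrite mxE mulrCA.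
Qed.

Lemma big_extLY (V : zmodType) (G : R -> 'rV[R]_n -> V) y0 Y (ell : 'I_k -> R) :
  \sum_(i < k.+1) G (extL ell i) (extY y0 Y i) = G (-1) y0 + \sum_i G (ell i) (Y i).
Proof.
rewrite big_ord_recl /extL /extY unlift_none; congr (_ + _).
by apply: eq_bigr => i _; rewrite liftK.
Qed.

End AffineCombinations.

Section C11.
Variables (R : realType) (n : nat) (L : R) (f : 'rV[R]_n -> R).
Hypothesis hf : C11 L f.

Lemma C11_taylor u y : `|f y - f u - 'd f u (y - u)| <= L / 2 * enorm (y - u) ^+ 2.
Proof.
have := @increment_bound_of_derive R (fun t => f (u + t *: (y - u)))
  (fun t => 'd f (u + t *: (y - u)) (y - u)) (L * enorm (y - u) ^+ 2) ('d f u (y - u)).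
rewrite /= scale1r scale0r addr0 [u + (y - u)]addrC subrK [L * _ / 2]mulrAC; apply.
  by move=> t; apply: is_derive_line; exact: hf.1.
move=> t t0; have /le_trans -> // := C11_diff_lipschitz (u + t *: (y - u)) u (y - u) hf.
rewrite addrAC subrr add0r enormZ ger0_norm //.
by have -> : L * enorm (y - u) ^+ 2 * t = enorm (y - u) * (L * (t * enorm (y - u))) by ring.
Qed.

Lemma C11_null_combination_bound (k : nat) (c : 'I_k -> R) (Y : 'I_k -> 'rV[R]_n) w :
  \sum_i c i = 0 -> \sum_i c i *: Y i = 0 ->
  `|\sum_i c i * f (Y i)| <= L / 2 * \sum_i `|c i| * enorm (Y i - w) ^+ 2.
Proof.
move=> c0 cY0.
have -> : \sum_i c i * f (Y i) = \sum_i c i * (f (Y i) - f w - 'd f w (Y i - w)).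
  under [RHS]eq_bigr do rewrite -addrA -opprD mulrBr.
  by rewrite sumrB null_combination_affine // subr0.
apply: le_trans (ler_norm_sum _ _ _) _; rewrite mulr_sumr; apply: ler_sum => i _.
by rewrite normrM mulrCA ler_wpM2l // C11_taylor.
Qed.

End C11.

Section WeightedCentroid.
Variables (R : realType) (n k : nat) (a : 'I_k -> R) (Y : 'I_k -> 'rV[R]_n).
Hypotheses (a_ge0 : forall i, 0 <= a i) (a_sum_gt0 : 0 < \sum_i a i).

Lemma weighted_centroid_sqr_min u :
  \sum_i a i * enorm (Y i - (\sum_i a i)^-1 *: \sum_i a i *: Y i) ^+ 2
  <= \sum_i a i * enorm (Y i - u) ^+ 2.
Proof.
set A := \sum_i a i; set w := A^-1 *: _.
have centroidE j : \sum_i a i * Y i 0 j = A * w 0 j.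
  rewrite /w mxE summxE mulVKf ?gt_eqF //.
  by apply: eq_bigr => i _; rewrite mxE.
clearbody w.
under eq_bigr do rewrite enorm_sqr mulr_sumr.
under [X in _ <= X]eq_bigr do rewrite enorm_sqr mulr_sumr.
rewrite exchange_big [X in _ <= X]exchange_big /=; apply: ler_sum => j _.
(* Coordinatewise, the excess is A (w_j - u_j)^2. *)
have -> : \sum_i a i * (Y i - u) 0 j ^+ 2 = \sum_i a i * (Y i - w) 0 j ^+ 2 +
    ((w 0 j - u 0 j) * 2 * \sum_i a i * Y i 0 j - (w 0 j - u 0 j) * (w 0 j + u 0 j) * A).
  rewrite !mulr_sumr -sumrB -big_split; apply: eq_bigr => i _ /=.
  by rewrite !mxE; ring.
rewrite centroidE lerDl.
have -> : (w 0 j - u 0 j) * 2 * (A * w 0 j) - (w 0 j - u 0 j) * (w 0 j + u 0 j) * A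
    = A * (w 0 j - u 0 j) ^+ 2 by ring.
by apply: mulr_ge0; [exact: ltW | exact: sqr_ge0].
Qed.

End WeightedCentroid.

Theorem corollary3p2 (R : realType) (n : nat) (L : R) (f : 'rV[R]_n -> R)
  (y : 'I_n.+1 -> 'rV[R]_n) (m : 'rV[R]_n -> R) (y0 : 'rV[R]_n) (ell : 'I_n.+1 -> R) :
  (1 <= n)%N -> 0 < L -> C11 L f ->
  affinely_independent y ->
  affine_fun m -> (forall i, m (y i) = f (y i)) ->
  barycentric y y0 ell ->
  `|m y0 - f y0| <= Phi L y0 y ell (wpt y0 y ell) /\
  (forall u : 'rV[R]_n, Phi L y0 y ell (wpt y0 y ell) <= Phi L y0 y ell u).
Proof.
move=> _ L_gt0 hf _ m_affine m_interp bary.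
have extL_sum0 : \sum_i extL ell i = 0.
  by have /= -> := big_extLY (fun a _ => a) y0 y ell; rewrite bary.1 addNr.
have extLY_sum0 : \sum_i extL ell i *: extY y0 y i = 0.
  by have /= -> := big_extLY (fun a v => a *: v) y0 y ell; rewrite bary.2 scaleN1r addNr.
have errE : m y0 - f y0 = \sum_i extL ell i * f (extY y0 y i).
  have /= -> := big_extLY (fun a v => a * f v) y0 y ell.
  under eq_bigr do rewrite -m_interp.
  by rewrite (affine_fun_barycentric m_affine bary) mulN1r addrC.
split; first by rewrite errE; exact: C11_null_combination_bound.
move=> u; apply: ler_wpM2l; first by rewrite divr_ge0 // ltW.
apply: weighted_centroid_sqr_min.
have /= -> := big_extLY (fun a _ => `|a|) y0 y ell.
by rewrite normrN normr1 ltr_pwDl // sumr_ge0.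
Qed.
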